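(* Let $G$ be a finite simple graph, let $r \ge 1$, and let $H_1,\dots,H_r$ be Hamilton cycles in $G$ (viewed as spanning subgraphs on $V(G)$). Let $H = H_1\cup\dots\cup H_r$ be the spanning subgraph with edge set $E(H_1)\cup\dots\cup E(H_r)$, and let $G-H$ be the spanning subgraph of $G$ with edge set $E(G)\setminus E(H)$. Then $\widetilde{\alpha}(G-H) + 1 \le (r+1)(\widetilde{\alpha}(G)+1)$.
   Context: For disjoint vertex sets $S,T$, $E(S,T)$ is the set of edges with one end in $S$ and one in $T$. An $(s,t)$-bipartite-hole in a graph $F$ consists of two disjoint sets of vertices $S,T$ with $|S|=s$, $|T|=t$ and $E(S,T)=\emptyset$. The bipartite-hole-number $\widetilde{\alpha}(F)$ is the least integer $r'$ which can be written as $r'=s+t-1$ for some positive integers $s,t$ such that $F$ contains no $(s,t)$-bipartite-hole. *)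

From mathcomp Require Import all_boot.
Set Implicit Arguments. Unset Strict Implicit. Unset Printing Implicit Defensive.

Definition simple_graph (V : finType) (g : rel V) :=
  symmetric g /\ irreflexive g.

Definition has_bhole (V : finType) (g : rel V) (s t : nat) : bool :=
  [exists S : {set V}, exists T : {set V},
     [&& [disjoint S & T], #|S| == s, #|T| == t &
         [forall x in S, forall y in T, ~~ g x y && ~~ g y x]]].

(* k = s + t - 1 for some positive s, t with no (s,t)-bipartite hole
   (s, t bounded by k+1, which is automatic since s + t - 1 = k). *)
Definition bhn_cand (V : finType) (g : rel V) (k : nat) : bool :=
  [exists s : 'I_(k.+2), exists t : 'I_(k.+2),
     [&& 0 < (s : nat), 0 < (t : nat), k == s + t - 1 & ~~ has_bhole g s t]].

Lemma bhn_cand_ex (V : finType) (g : rel V) : exists k, bhn_cand g k.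
Proof.
have hs : #|V|.+1 < #|V|.+3 by rewrite ltnS leqnSn.
have ht : 1 < #|V|.+3 by [].
exists #|V|.+1; apply/existsP; exists (Ordinal hs).
apply/existsP; exists (Ordinal ht).
have -> : has_bhole g #|V|.+1 1 = false.
  rewrite /has_bhole; apply/negbTE/negP; case/existsP => S; case/existsP => T; case/and4P => _ /eqP HS _ _.
  by move: (max_card S); rewrite HS ltnn.
by rewrite /= addnK eqxx.
Qed.

Definition bhn (V : finType) (g : rel V) : nat := ex_minn (bhn_cand_ex g).

Definition hamilton_cycle (V : finType) (g : rel V) (c : seq V) : bool :=
  [&& uniq c, size c == #|V|, 2 < size c & cycle g c].

Definition cycle_edge (V : finType) (c : seq V) : rel V :=
  fun x y => [&& x \in c, y \in c & (next c x == y) || (next c y == x)].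

Definition graph_minus_cycles (V : finType) (g : rel V) (r : nat)
    (H : 'I_r -> seq V) : rel V :=
  fun x y => g x y && ~~ [exists i, cycle_edge (H i) x y].

From mathcomp Require Import all_boot.
From mathcomp Require Import zify.
Set Implicit Arguments. Unset Strict Implicit. Unset Printing Implicit Defensive.

(* Let [b = bhn G] be realised by [s <= t] with [s + t = b + 1] and no
   [(s,t)]-hole in [G].  If [S, T] is an [(s, t + 2rs)]-hole in [G - H], remove
   from [T] the at most [2rs] neighbours of [S] along the cycles [H i]: what is
   left of [T] sees [S] only through edges of [G - H], i.e. not at all, giving
   an [(s,t)]-hole in [G].  So [G - H] has no [(s, t + r(s+t))]-hole, hence
   [bhn (G - H) + 1 <= s + t + r(s+t) = (r+1)(b+1)]. *)

Lemma leq_card_bigcup (I V : finType) (P : {pred I}) (A : I -> {set V}) :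
  #|\bigcup_(i in P) A i| <= \sum_(i in P) #|A i|.
Proof.
elim/big_rec2: _ => [|i n U _ leUn]; first by rewrite cards0.
by rewrite (leq_trans (leq_card_setU (A i) U).1) ?leq_add2l.
Qed.

Section BipartiteHoles.

Variables (V : finType) (g : rel V).

Lemma has_bholeP s t :
  reflect (exists S T : {set V}, [/\ [disjoint S & T], #|S| = s, #|T| = t &
             forall x y, x \in S -> y \in T -> ~~ g x y && ~~ g y x])
          (has_bhole g s t).
Proof.
apply: (iffP existsP) => [[S /existsP [T /and4P [dST /eqP cS /eqP cT /forallP noE]]]
                        | [S [T [dST cS cT noE]]]].
  exists S, T; split => // x y xS yT.
  by move: (noE x); rewrite xS => /forallP /(_ y); rewrite yT.
exists S; apply/existsP; exists T; rewrite dST cS cT !eqxx /=.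
apply/forall_inP => x xS; apply/forall_inP => y yT; exact: noE.
Qed.

Lemma has_bholeC s t : has_bhole g s t = has_bhole g t s.
Proof.
suff hC s' t' : has_bhole g s' t' -> has_bhole g t' s' by apply/idP/idP; apply: hC.
case/has_bholeP => S [T [dST cS cT noE]]; apply/has_bholeP; exists T, S.
by split; rewrite 1?disjoint_sym // => x y xT yS; rewrite andbC noE.
Qed.

Lemma has_bhole_sub (S T : {set V}) t :
  [disjoint S & T] -> (forall x y, x \in S -> y \in T -> ~~ g x y && ~~ g y x) ->
  t <= #|T| -> has_bhole g #|S| t.
Proof.
move=> dST noE /card_geqP [s [uniq_s size_s sub_sT]].
apply/has_bholeP; exists S, [set y in s]; split => //.
- by apply: disjointWr dST; apply/subsetP => y; rewrite inE => /sub_sT.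
- by rewrite cardsE -size_s; apply/card_uniqP.
- by move=> x y xS; rewrite inE => /sub_sT; apply: noE.
Qed.

Lemma has_bholeW s t t' : t <= t' -> has_bhole g s t' -> has_bhole g s t.
Proof.
move=> le_tt' /has_bholeP [S [T [dST <- cT noE]]].
by apply: has_bhole_sub dST noE _; rewrite cT.
Qed.

Lemma bhn_le_no_bhole s t :
  0 < s -> 0 < t -> ~~ has_bhole g s t -> bhn g <= s + t - 1.
Proof.
move=> s_gt0 t_gt0 noH; rewrite /bhn; case: ex_minnP => b _; apply.
have ls : s < (s + t - 1).+2 by lia.
have lt : t < (s + t - 1).+2 by lia.
apply/existsP; exists (Ordinal ls); apply/existsP; exists (Ordinal lt).
by rewrite /= s_gt0 t_gt0 eqxx noH.
Qed.

Lemma bhn_witness :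
  exists s t, [/\ 0 < s, s <= t, bhn g + 1 = s + t & ~~ has_bhole g s t].
Proof.
rewrite /bhn; case: ex_minnP => b /existsP [s /existsP [t]] /and4P [s_gt0 t_gt0 /eqP eb noH] _.
have [le_st | /ltnW le_ts] := leqP s t.
  by exists s, t; split => //; lia.
by exists t, s; rewrite has_bholeC; split => //; lia.
Qed.

End BipartiteHoles.

Definition cycle_nbhd (V : finType) (c : seq V) (S : {set V}) : {set V} :=
  [set next c x | x in S] :|: [set prev c x | x in S].

Lemma card_cycle_nbhd (V : finType) (c : seq V) (S : {set V}) :
  #|cycle_nbhd c S| <= 2 * #|S|.
Proof.
rewrite (leq_trans (leq_card_setU _ _).1) // mul2n -addnn.
by rewrite leq_add ?leq_imset_card.
Qed.

Lemma cycle_edgeC (V : finType) (c : seq V) x y :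
  cycle_edge c x y = cycle_edge c y x.
Proof. by rewrite /cycle_edge andbA [(x \in c) && _]andbC -andbA orbC. Qed.

Lemma cycle_edge_nbhd (V : finType) (c : seq V) (S : {set V}) x y :
  uniq c -> x \in S -> cycle_edge c x y -> y \in cycle_nbhd c S.
Proof.
move=> uc xS /and3P [_ _ /orP [/eqP <- | /eqP yx]]; apply/setUP.
  by left; apply: imset_f.
by right; apply/imsetP; exists x; rewrite // -yx prev_next.
Qed.

Lemma has_bhole_minus_cycles (V : finType) (g : rel V) (r : nat)
    (H : 'I_r -> seq V) s t :
  (forall i, uniq (H i)) ->
  has_bhole (graph_minus_cycles g H) s (t + 2 * r * s) -> has_bhole g s t.
Proof.
move=> uH /has_bholeP [S [T [dST <- cT noE]]].
pose N := \bigcup_(i < r) cycle_nbhd (H i) S.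
have cN : #|N| <= 2 * r * #|S|.
  apply: leq_trans (leq_card_bigcup _ _) _.
  rewrite (leq_trans (leq_sum _ (fun i _ => card_cycle_nbhd (H i) S))) //.
  by rewrite sum_nat_const card_ord; lia.
have noCycleEdge x y i : x \in S -> y \in T :\: N -> ~~ cycle_edge (H i) x y.
  move=> xS /setDP [_ yN]; apply: contra yN => /(cycle_edge_nbhd (uH i) xS) yNi.
  by apply/bigcupP; exists i.
apply: (has_bhole_sub (T := T :\: N)).
- by apply: disjointWr dST; apply: subsetDl.
- move=> x y xS yTN; have /setDP [yT _] := yTN.
  have := noE x y xS yT; rewrite /graph_minus_cycles.
  have -> : [exists i, cycle_edge (H i) x y] = false.
    by apply/negbTE/existsPn => i; apply: noCycleEdge.
  have -> : [exists i, cycle_edge (H i) y x] = false.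
    by apply/negbTE/existsPn => i; rewrite cycle_edgeC; apply: noCycleEdge.
  by rewrite !andbT.
- by have := cardsID N T; have := subset_leq_card (subsetIr T N); lia.
Qed.

Theorem lemma10 (V : finType) (g : rel V) (r : nat) (H : 'I_r -> seq V) :
  simple_graph g -> 0 < r ->
  (forall i, hamilton_cycle g (H i)) ->
  bhn (graph_minus_cycles g H) + 1 <= (r + 1) * (bhn g + 1).
Proof.
move=> _ _ hamH.
have uH i : uniq (H i) by case/and4P: (hamH i).
have [s [t [s_gt0 le_st bhn_g noH]]] := bhn_witness g.
have noHm : ~~ has_bhole (graph_minus_cycles g H) s (t + r * (s + t)).
  apply: contra noH => holeHm; apply: has_bhole_minus_cycles uH _.
  by apply: has_bholeW holeHm; nia.
have := bhn_le_no_bhole s_gt0 _ noHm; rewrite bhn_g; nia.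
Qed.
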